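(* Let $(a_n)_{n\ge 0}$ be the $0/1$ sequence with $a_n=1$ if $n+1$ is a power of $2$ (i.e. $n=2^k-1$ for some integer $k\ge 0$) and $a_n=0$ otherwise. Call a permutation $\pi$ of $\{0,1,\dots,n-1\}$ nimble if for every $i\in\{0,\dots,n-1\}$ the number $i+\pi(i)+1$ is a power of $2$. Then for every integer $n\ge 1$ there exists a unique nimble permutation $\pi_n$ of $\{0,1,\dots,n-1\}$, and $$\det\left(a_{i+j}\right)_{i,j=0}^{n-1}=\operatorname{sgn}(\pi_n)\,a_{0+\pi_n(0)}a_{1+\pi_n(1)}\cdots a_{n-1+\pi_n(n-1)}=(-1)^{\binom{n}{2}}.$$
   Context: $a_n$ coincides with the Catalan number $C_n=\frac{1}{n+1}\binom{2n}{n}$ reduced modulo $2$ and regarded as an integer in $\{0,1\}$. A permutation is nimble exactly when $a_{0+\pi(0)}\cdots a_{n-1+\pi(n-1)}\neq 0$. *)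

From HB Require Import structures.
From mathcomp Require Import all_boot all_order all_algebra all_fingroup.
Set Implicit Arguments. Unset Strict Implicit. Unset Printing Implicit Defensive.
Import GRing.Theory Num.Theory.

Definition is_pow2 (m : nat) : Prop := exists k : nat, m = 2 ^ k.

Definition a_seq (n : nat) : int :=
  if [exists k : 'I_n.+2, n.+1 == 2 ^ k] then 1%R else 0%R.

Definition nimble (n : nat) (s : 'S_n) : Prop :=
  forall i : 'I_n, is_pow2 (i + s i + 1).

Definition hankel_a (n : nat) : 'M[int]_n := \matrix_(i < n, j < n) a_seq (i + j).

From mathcomp Require Import all_boot all_order all_algebra all_fingroup zify.
Set Implicit Arguments. Unset Strict Implicit. Unset Printing Implicit Defensive.
Import GRing.Theory Num.Theory.

(* Let 2^k be the least power of two with m <= 2^k, and pi a nimble permutation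
   of [0, m).  For i in [2^(k-1), m) the sum i + pi(i) + 1 lies strictly between
   2^(k-1) and 2^(k+1), so pi(i) = 2^k - 1 - i; applied to pi^-1 this gives the
   same on [2^k - m, 2^(k-1)).  So pi reverses [2^k - m, m) and restricts to a
   nimble permutation of [0, 2^k - m), which gives existence and uniqueness by
   induction on m.  As pi^-1 is nimble too, pi is an involution, and its only
   possible fixed point is 0, since 2i + 1 is a power of 2 only for i = 0.  Thus
   pi is a product of n/2 disjoint transpositions and sgn pi = (-1)^(n/2) =
   (-1)^C(n,2).  Every other permutation contributes a zero term to the Leibniz
   expansion of the determinant. *)

Lemma up_log2_bounds m : 0 < m -> m <= 2 ^ up_log 2 m < 2 * m.
Proof.
case: m => [|[|m]] // _.
have /andP[lo hi] := up_log_bounds (isT : 1 < 2) (isT : 1 < m.+2).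
by move: lo hi; case: up_log => [|k] //=; rewrite expnS; lia.
Qed.

Lemma is_pow2_bracket k x : is_pow2 x -> 2 ^ k < 2 * x -> x < 2 * 2 ^ k -> x = 2 ^ k.
Proof. by case=> e ->; rewrite -!expnS !ltn_exp2l // => lo hi; have -> : e = k by lia. Qed.

Lemma is_pow2_odd x : is_pow2 x -> odd x -> x = 1.
Proof. by case=> [[|k] ->] //; rewrite expnS oddM. Qed.

Section NimbleOn.

Variable N : nat.
Implicit Types (s t : 'S_N) (i : 'I_N).

Definition nimble_on m s :=
  (forall i, (s i < m) = (i < m)) /\ (forall i, i < m -> is_pow2 (i + s i + 1)).

Lemma nimble_onV m s : nimble_on m s -> nimble_on m s^-1%g.
Proof.
case=> stab pow; split=> i; first by rewrite -[in RHS](permKV s i) stab.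
move=> lt_im; have := pow (s^-1%g i); rewrite permKV addnAC addnC -addnA.
by apply; rewrite -stab permKV.
Qed.

Section Mirror.

Variables m k : nat.
Hypotheses (le_mN : m <= N) (le_m2k : m <= 2 ^ k) (lt_2km : 2 ^ k < 2 * m).

Lemma nimble_on_top s i : nimble_on m s -> i < m -> 2 ^ k < 2 * (i + 1) ->
  i + s i + 1 = 2 ^ k.
Proof.
case=> stab pow lt_im top; have := stab i; rewrite lt_im => lt_sim.
by apply: is_pow2_bracket; [exact: pow | lia | lia].
Qed.

Lemma nimble_on_mirror s i : nimble_on m s -> 2 ^ k - m <= i < m ->
  s i = 2 ^ k - 1 - i :> nat.
Proof.
move=> sP /andP[lo hi].
have [top|low] := ltnP (2 ^ k) (2 * (i + 1)); first by have := nimble_on_top sP hi top; lia.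
have lt_jN : 2 ^ k - 1 - i < N by lia.
pose j := Ordinal lt_jN.
have lt_jm : j < m by rewrite /=; lia.
have /= top_j := nimble_on_top (nimble_onV sP) lt_jm ltac:(rewrite /=; lia).
have sVj : s^-1%g j = i by apply: ord_inj; lia.
by have -> : s i = j by rewrite -sVj permKV.
Qed.

Lemma nimble_on_shrink s : nimble_on m s -> nimble_on (2 ^ k - m) s.
Proof.
have below (r : 'S_N) i : nimble_on m r -> i < 2 ^ k - m -> r i < 2 ^ k - m.
  move=> rP lt_it; rewrite ltnNge; apply/negP => ge_rit.
  have ri_range : 2 ^ k - m <= r i < m by rewrite ge_rit rP.1; lia.
  by have := nimble_on_mirror (nimble_onV rP) ri_range; rewrite permK; lia.
move=> sP; split=> [i|i lt_it]; last by apply: sP.2; lia.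
apply/idP/idP; last exact: below.
by move/(below _ _ (nimble_onV sP)); rewrite permK.
Qed.

End Mirror.

Lemma nimble_on_uniq m s t : m <= N -> nimble_on m s -> nimble_on m t ->
  forall i, i < m -> s i = t i.
Proof.
elim/ltn_ind: m s t => m IH s t le_mN sP tP i lt_im.
have /andP[le_m2k lt_2km] := up_log2_bounds (leq_ltn_trans (leq0n i) lt_im).
set k := up_log 2 m in le_m2k lt_2km.
have [le_ti|lt_it] := leqP (2 ^ k - m) i.
  by apply: ord_inj; rewrite !(nimble_on_mirror le_mN le_m2k lt_2km) ?le_ti.
apply: (IH (2 ^ k - m)) => //; try lia; exact: nimble_on_shrink.
Qed.

Definition mirror_fun a b i : 'I_N :=
  if a <= i < b then insubd i (a + b - 1 - i) else i.

Lemma mirror_funK a b : involutive (mirror_fun a b).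
Proof.
have val_mirror i : mirror_fun a b i =
    (if (a <= i < b) && (a + b - 1 - i < N) then a + b - 1 - i else i) :> nat.
  by rewrite /mirror_fun; case: ifP => //= _; rewrite val_insubd.
move=> i; apply: ord_inj; rewrite val_mirror; have := val_mirror i.
case: ifP => [/andP[/andP[lo hi] lt_N]|out] ->; last by rewrite out.
by rewrite ifT; have := ltn_ord i; lia.
Qed.

Definition mirror a b : 'S_N := perm (can_inj (mirror_funK a b)).

Lemma mirrorE a b i : b <= N ->
  mirror a b i = (if a <= i < b then a + b - 1 - i else i) :> nat.
Proof.
rewrite permE /mirror_fun => le_bN; case: ifP => //= /andP[lo hi].
by rewrite val_insubd ifT //; lia.
Qed.

Lemma exists_nimble_prefix m : m <= N -> exists s,
  (forall i, m <= i -> s i = i) /\ (forall i, i < m -> is_pow2 (i + s i + 1)).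
Proof.
elim/ltn_ind: m => m IH le_mN.
have [->|m_gt0] := posnP m; first by exists 1%g; split=> i; rewrite ?perm1 // ltn0.
have /andP[le_m2k lt_2km] := up_log2_bounds m_gt0.
set k := up_log 2 m in le_m2k lt_2km.
have [r [r_fix r_pow]] := IH (2 ^ k - m) ltac:(lia) ltac:(lia).
have mirror_out i : ~~ (2 ^ k - m <= i < m) -> mirror (2 ^ k - m) m i = i.
  by move=> out; apply: ord_inj; rewrite mirrorE // (negbTE out).
exists (mirror (2 ^ k - m) m * r)%g; split=> i i_range; rewrite permM.
  by rewrite mirror_out ?r_fix //; lia.
have [lt_it|le_ti] := ltnP i (2 ^ k - m).
  by rewrite mirror_out; [apply: r_pow | lia].
have mirror_i : mirror (2 ^ k - m) m i = 2 ^ k - 1 - i :> nat.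
  by rewrite mirrorE // ifT; lia.
rewrite r_fix; last by rewrite mirror_i; lia.
by exists k; rewrite mirror_i; lia.
Qed.

End NimbleOn.

Lemma nimble_on_full n (s : 'S_n) : nimble s -> nimble_on n s.
Proof. by split=> [i|i _]; rewrite ?ltn_ord. Qed.

Lemma nimble_uniq n (s t : 'S_n) : nimble s -> nimble t -> s = t.
Proof.
move=> sN tN; apply/permP => i.
exact: nimble_on_uniq (leqnn n) (nimble_on_full sN) (nimble_on_full tN) i (ltn_ord i).
Qed.

Lemma exists_nimble n : exists s : 'S_n, nimble s.
Proof.
by have [s [_ s_pow]] := exists_nimble_prefix (leqnn n); exists s => i; apply: s_pow.
Qed.

Lemma nimble_involutive n (s : 'S_n) : nimble s -> involutive s.
Proof.
move=> sN; have sVN : nimble s^-1%g.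
  by move=> i; apply: (nimble_onV (nimble_on_full sN)).2 i (ltn_ord i).
by move=> i; rewrite -{1}(nimble_uniq sVN sN) permK.
Qed.

Lemma nimble_fixed n (s : 'S_n) i : nimble s -> s i = i -> i = 0 :> nat.
Proof.
move=> sN sii; have := is_pow2_odd (sN i).
by rewrite sii addnn addn1 /= odd_double => /(_ isT); lia.
Qed.

Definition moved (T : finType) (s : {perm T}) := [set x | s x != x].

Section InvolutionTransposition.

Variables (T : finType) (s : {perm T}) (x : T).
Hypothesis sK : involutive s.

Lemma tperm_involution_commute z : tperm x (s x) (s z) = s (tperm x (s x) z).
Proof.
have tsC : commute (tperm x (s x)) s.
  by rewrite /commute conjgC tpermJ sK tpermC.
by rewrite -!permM tsC.
Qed.

Lemma involutive_tpermM : involutive (tperm x (s x) * s)%g.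
Proof. by move=> z; rewrite !permM -tperm_involution_commute sK tpermK. Qed.

Lemma moved_tpermM : moved (tperm x (s x) * s)%g = moved s :\ x :\ s x.
Proof.
apply/setP => z; rewrite !inE permM.
have [->|z_neq_x] := eqVneq z x; first by rewrite tpermL sK eqxx andbF.
have [->|z_neq_sx] := eqVneq z (s x); first by rewrite tpermR eqxx.
by rewrite tpermD 1?eq_sym.
Qed.

End InvolutionTransposition.

Lemma odd_perm_involution (T : finType) (s : {perm T}) : involutive s ->
  ~~ odd #|moved s| /\ odd_perm s = odd #|moved s|./2.
Proof.
have [n] := ubnP #|moved s|; elim: n s => // n IH s lt_moved sK.
have [moved0|[x]] := set_0Vmem (moved s).
  rewrite moved0 cards0; suff -> : s = 1%g by rewrite odd_perm1.
  by apply/permP => z; apply/eqP; move/setP: moved0 => /(_ z); rewrite !inE perm1 => /negbFE.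
rewrite inE => x_moved.
have card_moved : #|moved s| = (#|moved (tperm x (s x) * s)%g|).+2.
  rewrite moved_tpermM // (cardsD1 x) (cardsD1 (s x) (_ :\ x)) !inE.
  by rewrite x_moved sK eq_sym x_moved.
have lt_moved' : #|moved (tperm x (s x) * s)%g| < n by lia.
have [even_s' odd_s'] := IH _ lt_moved' (involutive_tpermM x sK).
rewrite card_moved /= negbK even_s'; split=> //.
by move: odd_s'; rewrite odd_permM odd_tperm eq_sym x_moved => <-; case: odd_perm.
Qed.

Lemma odd_perm_nimble n (s : 'S_n) : nimble s -> odd_perm s = odd n./2.
Proof.
move=> sN; have [moved_even ->] := odd_perm_involution (nimble_involutive sN).
have fixed_le1 : #|[set i | s i == i]| <= 1.
  apply/card_le1_eqP => i j; rewrite !inE.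
  by move=> /eqP/(nimble_fixed sN) i0 /eqP/(nimble_fixed sN) j0; apply: ord_inj; rewrite i0 j0.
have := cardsC [set i | s i == i]; rewrite card_ord.
have -> : ~: [set i | s i == i] = moved s by apply/setP => i; rewrite !inE.
by move=> card_n; congr odd; lia.
Qed.

Lemma odd_bin2 n : odd 'C(n, 2) = odd n./2.
Proof.
by elim: n => // n IH; rewrite binS bin1 oddD IH /= uphalf_half oddD oddb addbC.
Qed.

Lemma a_seq_pow2 m : is_pow2 m.+1 -> a_seq m = 1%R.
Proof.
rewrite /a_seq => -[e he]; rewrite ifT //; apply/existsP.
have lt_e : e < m.+2 by have := ltn_expl e (isT : 1 < 2); lia.
by exists (Ordinal lt_e); rewrite /= he.
Qed.

Lemma a_seq_neq0 m : a_seq m != 0%R -> is_pow2 m.+1.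
Proof. by rewrite /a_seq; case: ifP => // /existsP[e /eqP he] _; exists e. Qed.

Local Open Scope ring_scope.

Lemma prod_a_seq_nimble n (s : 'S_n) : nimble s -> \prod_(i < n) a_seq (i + s i) = 1.
Proof. by move=> sN; apply: big1 => i _; apply: a_seq_pow2; rewrite -addn1. Qed.

Lemma det_hankel_a n (s : 'S_n) : nimble s ->
  \det (hankel_a n) = (-1) ^+ s * \prod_(i < n) a_seq (i + s i).
Proof.
move=> sN; rewrite /determinant (bigD1 s) //= [X in _ + X]big1 ?addr0 => [|t t_neq_s].
  by congr (_ * _); apply: eq_bigr => i _; rewrite mxE.
apply/eqP; rewrite mulf_eq0; apply/orP; right; apply: contraNT t_neq_s.
move=> /prodf_neq0 t_pow; apply/eqP/(nimble_uniq _ sN) => i.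
by have := t_pow i isT; rewrite mxE addn1 => /a_seq_neq0.
Qed.

Theorem theorem1p1 (n : nat) (hn : (1 <= n)%N) :
  (exists s : 'S_n, nimble s /\ forall t : 'S_n, nimble t -> t = s) /\
  (forall s : 'S_n, nimble s ->
     \det (hankel_a n) = (-1) ^+ s * \prod_(i < n) a_seq (i + s i) /\
     (-1) ^+ s * \prod_(i < n) a_seq (i + s i) = (-1) ^+ 'C(n, 2)).
Proof.
(* [hn] is not needed: the case n = 0 holds as well. *)
split.
  have [s sN] := exists_nimble n.
  by exists s; split=> // t tN; exact: nimble_uniq tN sN.
move=> s sN; rewrite (det_hankel_a sN) (prod_a_seq_nimble sN) mulr1; split=> //.
by rewrite -[RHS]signr_odd odd_bin2 (odd_perm_nimble sN).
Qed.
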